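(* Let $L/K$ be a finite extension, $K'/K$ a finite Galois extension, and $M/K$ a finite extension with $L\subseteq M$ (all inside $\bar K$), such that $\tilde L$ and $K'$ are linearly disjoint over $K$ and $\tilde M$ and $K'$ are linearly disjoint over $K$. Then $\rho_K(M,L)=\rho_{K'}(MK',LK')$.
   Context: $K$ is a perfect field with a fixed algebraic closure $\bar K$; $\tilde L,\tilde M$ denote Galois closures over $K$ in $\bar K$. Root capacity: for $\alpha\in\bar K$ with minimal polynomial $f$ over $K$ and an extension $M/K$, $\rho_K(M,\alpha)$ is the number of roots of $f$ contained in $M$. For a finite extension $L/K$, $\rho_K(M,L):=\rho_K(M,\alpha)$ for any primitive element $\alpha$ with $L=K(\alpha)$ (this is independent of the choice of $\alpha$). $\rho_{K'}$ is defined analogously with base field $K'$. *)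

From HB Require Import structures.
From mathcomp Require Import all_boot all_order all_algebra all_fingroup all_field.
From Stdlib Require Import ClassicalEpsilon.
Set Implicit Arguments. Unset Strict Implicit. Unset Printing Implicit Defensive.
Import GRing.Theory.
Local Open Scope ring_scope.

Definition perfect_field (F : fieldType) : Prop :=
  forall p : nat, p \in [pchar F] -> forall x : F, exists y : F, y ^+ p = x.

Section RootCapacity.
Variables (F : fieldType) (E : splittingFieldType F).

Definition roots_in_list (f : {poly E}) (M : {vspace E}) (s : seq E) : Prop :=
  uniq s /\ forall x : E, x \in s <-> (x \in M /\ root f x).

(* number of roots of f contained in M (f <> 0, so such a list exists) *)
Definition nroots_in (f : {poly E}) (M : {vspace E}) : nat :=
  size (epsilon (inhabits [::]) (roots_in_list f M)).

Definition rho_elt (K M : {subfield E}) (a : E) : nat :=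
  nroots_in (minPoly K a) M.

Definition prim_elt (K L : {subfield E}) : E :=
  epsilon (inhabits 0) (fun a : E => (<<K; a>>%VS = L :> {vspace E})).

Definition rho (K M L : {subfield E}) : nat := rho_elt K M (prim_elt K L).

Definition is_gal_closure (K L N : {subfield E}) : Prop :=
  (L <= N)%VS /\ galois K N /\
  forall N' : {subfield E}, (L <= N')%VS -> galois K N' -> (N <= N')%VS.

Definition gal_closure (K L : {subfield E}) : {subfield E} :=
  epsilon (inhabits 1%AS) (is_gal_closure K L).

Definition lin_disjoint (K A B : {subfield E}) : Prop :=
  (\dim_K (A * B)%AS = \dim_K A * \dim_K B)%N.

End RootCapacity.

(* Everything happens in the splitting field E, which is Galois over each of its
   subfields since F is perfect.  For L = K(c), the roots of the minimal polynomial
   of c lying in M are the values x c of the K-automorphisms x of E with x(L) <= M,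
   and x c = y c iff x and y lie in the same right coset of Gal(E/L); hence
   rho_K(M, L) is the number of these cosets.  Linear disjointness of a Galois
   closure N with K' means Gal(E/N) Gal(E/K') = Gal(E/F).  For N the closure of L
   this lets every coset be represented in A = Gal(E/K'); for N the closure of M
   it gives N :&: MK' = M, so that x in A maps LK' into MK' iff it maps L into M.
   Finally, on A the cosets of Gal(E/L) are those of Gal(E/L) :&: A = Gal(E/LK'). *)

From HB Require Import structures.
From mathcomp Require Import all_boot all_order all_algebra all_fingroup all_field.
From mathcomp Require Import zify.
From Stdlib Require Import ClassicalEpsilon.
Set Implicit Arguments. Unset Strict Implicit. Unset Printing Implicit Defensive.
Import GRing.Theory.
Local Open Scope ring_scope.

Lemma card_imset_rcoset_setI (gT : finGroupType) (P A : {group gT}) (S : {set gT}) :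
  S \subset A -> #|[set (P :* x)%g | x in S]| = #|[set ((P :&: A) :* x)%g | x in S]|.
Proof.
move=> sSA; have PZ x : (P * ((P :&: A) :* x) = P :* x)%g.
  by rewrite mulgA mulGSid ?subsetIl.
have -> : [set (P :* x)%g | x in S]
          = [set (P * Z)%g | Z in [set ((P :&: A) :* x)%g | x in S]].
  by rewrite -imset_comp; apply: eq_imset => x /=; rewrite PZ.
rewrite card_in_imset //.
move=> _ _ /imsetP[x Sx ->] /imsetP[y Sy ->] /=.
rewrite !PZ => /rcoset_eqP/rcosetP[p Pp xE].
apply/rcoset_eqP/rcosetP; exists p => //; rewrite inE Pp /=.
have -> : p = (x * y^-1)%g by rewrite xE mulgK.
by rewrite groupM ?groupV ?(subsetP sSA).
Qed.

Lemma perfect_poly_pth_root (F : fieldType) p (pF : p \in [pchar F]) (g : {poly F}) :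
  perfect_field F -> exists h : {poly F}, map_poly (pFrobenius_aut pF) h = g.
Proof.
move=> perfF.
have root_ex (c : F) : exists y : F, y ^+ p == c.
  by have [y <-] := perfF _ pF c; exists y.
pose r c := xchoose (root_ex c); have rK c : r c ^+ p = c := eqP (xchooseP (root_ex c)).
exists (\poly_(i < size g) r g`_i); apply/polyP => i.
rewrite coef_map coef_poly; case: ltnP => [_ | le_g_i]; first exact: rK.
by rewrite (nth_default 0 le_g_i) raddf0.
Qed.

Section GaloisCosets.
Variables (F : fieldType) (E : splittingFieldType F).

Lemma gal_prodv (X Y : {subfield E}) :
  'Gal({:E} / (X * Y)%AS)%g = ('Gal({:E} / X) :&: 'Gal({:E} / Y))%g.
Proof.
apply/eqP; rewrite eqEsubset subsetI !galS ?field_subvMr ?field_subvMl //=.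
rewrite galois_connection ?subvf //; apply: prodv_sub.
  by rewrite -galois_connection ?subvf ?subsetIl.
by rewrite -galois_connection ?subvf ?subsetIr.
Qed.

Lemma gal_fixed_adjoin (K : {subfield E}) (c : E) (z : gal_of {:E}) :
  z \in 'Gal({:E} / K)%g -> z c = c -> z \in 'Gal({:E} / <<K; c>>)%g.
Proof.
move=> Kz zc; rewrite -sub1set galois_connection ?subvf //; apply/FadjoinP; split.
  by rewrite -galois_connection ?subvf // sub1set.
by apply/fixedFieldP; [exact: memvf | move=> w /set1P ->].
Qed.

Lemma eq_rcoset_gal_adjoin (K : {subfield E}) (c : E) (x y : gal_of {:E}) :
  x \in 'Gal({:E} / K)%g -> y \in 'Gal({:E} / K)%g ->
  (('Gal({:E} / <<K; c>>) :* x == 'Gal({:E} / <<K; c>>) :* y)%g) = (x c == y c).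
Proof.
move=> Kx Ky; apply/eqP/eqP => [/rcoset_eqP/rcosetP[z Hz ->] | xy_c].
  by rewrite galM ?memvf // (fixed_gal (subvf _) Hz) ?memv_adjoin.
apply/rcoset_eqP/rcosetP; exists (x * y^-1)%g; last by rewrite mulgKV.
apply: gal_fixed_adjoin; first by rewrite groupM ?groupV.
by rewrite galM ?memvf // xy_c -galM ?memvf // mulgV gal_id.
Qed.

Definition gal_into (K : {subfield E}) (X M : {vspace E}) : {set gal_of {:E}} :=
  [set x in 'Gal({:E} / K)%g | (x @: X <= M)%VS].

Lemma nroots_inE (f : {poly E}) (M : {vspace E}) (s : seq E) :
  uniq s -> (forall w, (w \in s) = (w \in M) && root f w) -> nroots_in f M = size s.
Proof.
move=> uniq_s mem_s; rewrite /nroots_in.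
have [uniq_t mem_t] : roots_in_list f M (epsilon (inhabits [::]) (roots_in_list f M)).
  by apply: epsilon_spec; exists s; split => // w; rewrite mem_s; split => /andP.
apply/perm_size/uniq_perm => // w; rewrite mem_s.
by apply/idP/andP => /mem_t.
Qed.

Lemma gal_into_root_minPoly (K M : {subfield E}) (c w : E) : (K <= M)%VS ->
  reflect (exists2 x, x \in gal_into K <<K; c>> M & x c = w)
          ((w \in M) && root (minPoly K c) w).
Proof.
move=> sKM; apply: (iffP andP) => [[Mw rw] | [x]].
  have [x Kx xc] := normalField_root_minPoly (subvf K) (normalFieldf K) (memvf c) rw.
  exists x => //; rewrite inE Kx aimg_adjoin /=.
  have /andP[_ fixK] : kHom K {:E} x by rewrite -gal_kHom ?subvf.
  by rewrite fixedSpace_limg // xc; apply/FadjoinP.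
rewrite inE => /andP[Kx sxM] <-; split.
  by apply: (subvP sxM); apply/memv_img/memv_adjoin.
exact: root_minPoly_gal (subvf K) Kx (memvf c).
Qed.

Lemma nroots_minPoly_card_rcosets (K M : {subfield E}) (c : E) : (K <= M)%VS ->
  nroots_in (minPoly K c) M
    = #|[set ('Gal({:E} / <<K; c>>) :* x)%g | x in gal_into K <<K; c>> M]|.
Proof.
move=> sKM; set P := 'Gal(_ / _)%g; set S := gal_into _ _ _.
have galK x : x \in S -> x \in 'Gal({:E} / K)%g by rewrite inE => /andP[].
have repr_c x : repr (P :* x)%g c = x c.
  have /rcosetP[z Pz ->] := mem_repr_rcoset [group of P] x.
  by rewrite galM ?memvf // (fixed_gal (subvf _) Pz) ?memv_adjoin.
rewrite cardE -(size_map (fun Z : {set gal_of {:E}} => repr Z c)); apply: nroots_inE.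
  rewrite map_inj_in_uniq ?enum_uniq // => Z1 Z2.
  rewrite !mem_enum => /imsetP[x Sx ->] /imsetP[y Sy ->] /eqP.
  by rewrite !repr_c -(eq_rcoset_gal_adjoin _ (galK x Sx) (galK y Sy)) => /eqP.
move=> w; apply/mapP/(gal_into_root_minPoly _ _ sKM) => [[Z] | [x Sx <-]].
  by rewrite mem_enum => /imsetP[x Sx ->] ->; exists x; rewrite ?repr_c.
by exists (P :* x)%g; rewrite ?repr_c // mem_enum; apply/imsetP; exists x.
Qed.

Lemma normalField_limg (N X : {subfield E}) (x : gal_of {:E}) :
  normalField 1 N -> (X <= N)%VS -> x \in 'Gal({:E} / 1%AS)%g -> (x @: X <= N)%VS.
Proof.
move=> nN sXN Gx.
have /andP[_ /eqP xN] : kAut 1 N x.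
  apply: (@normalField_kAut _ _ _ _ {:E}%AS _ _ nN); first by rewrite sub1v subvf.
  by rewrite -gal_kAut ?sub1v.
by rewrite -xN limgS.
Qed.

Lemma imset_rcoset_gal_into (L Lt M K' : {subfield E}) : (L <= Lt)%VS ->
  ('Gal({:E} / Lt) * 'Gal({:E} / K'))%g = 'Gal({:E} / 1%AS)%g ->
  [set ('Gal({:E} / L) :* x)%g | x in gal_into 1 L M]
    = [set ('Gal({:E} / L) :* x)%g | x in gal_into 1 L M :&: 'Gal({:E} / K')%g].
Proof.
move=> sLLt galLtK'; apply/eqP; rewrite eqEsubset andbC imsetS ?subsetIl //=.
apply/subsetP => _ /imsetP[x Sx ->].
have := Sx; rewrite inE => /andP[Gx sxLM].
rewrite -galLtK' in Gx; case/mulsgP: Gx => n a Ltn K'a xE.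
have Ln : n \in 'Gal({:E} / L)%g := subsetP (galS _ sLLt) n Ltn.
have -> : ('Gal({:E} / L) :* x = 'Gal({:E} / L) :* a)%g.
  by apply/rcoset_eqP/rcosetP; exists n.
have xL : (x @: L = a @: L)%VS.
  by apply: eq_in_limg => v Lv; rewrite xE galM ?memvf // (fixed_gal (subvf L) Ln Lv).
apply/imsetP; exists a => //.
by rewrite !inE K'a (subsetP (galS _ (sub1v K'))) //= -xL sxLM.
Qed.

Hypothesis perfF : perfect_field F.

Lemma perfect_separable_element (x : E) : separable_element 1 x.
Proof.
(* If the minimal polynomial were g(X^p), a p-th root h of g taken coefficientwise
   (F is perfect) would satisfy h(x)^p = g(x^p) = 0 with deg h < deg (minPoly x). *)
apply/negPn/negP => /separablePn_pchar [p pE [g /polyOver1P[g0 ->] Dm]].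
have pF : p \in [pchar F] by rewrite -(fmorph_pchar (in_alg E)).
have [h0 Dg0] := perfect_poly_pth_root pF g0 perfF.
pose h := map_poly (in_alg E) h0.
have Dg : map_poly (pFrobenius_aut pE) h = map_poly (in_alg E) g0.
  rewrite -Dg0 -!map_poly_comp; apply: eq_map_poly => c /=.
  by rewrite !pFrobenius_autE exprZn expr1n.
have hx : root h x.
  suff: h.[x] ^+ p == 0 by rewrite expf_eq0 => /andP[].
  rewrite -(pFrobenius_autE pE) -horner_map Dg.
  change ((map_poly (in_alg E) g0).[x ^+ p] == 0).
  by rewrite -hornerXn -horner_comp -Dm minPolyxx.
have sz_h : size h = size g0 by rewrite -Dg0 !size_map_poly.
have /dvdp_leq le_m_h : minPoly 1 x %| h.
  by apply: minPoly_dvdp hx; apply/polyOver1P; exists h0.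
have nz_h : h != 0.
  rewrite -size_poly_eq0 sz_h size_poly_eq0.
  apply: contra_neq (monic_neq0 (monic_minPoly 1 x)) => g0_0.
  by rewrite Dm g0_0 map_poly0 comp_poly0.
have := le_m_h nz_h; have := size_comp_poly (map_poly (in_alg E) g0) 'X^p.
rewrite -Dm size_minPoly size_polyXn size_map_poly sz_h /=.
have := prime_gt1 (pcharf_prime pE).
rewrite /adjoin_degree; move: (_.-1) (size g0) => d [|n] /=; nia.
Qed.

Lemma galois_fullv (K : {subfield E}) : galois K fullv.
Proof.
apply: (@galoisS _ _ 1%AS); first by rewrite sub1v subvf.
rewrite /galois sub1v normalFieldf andbT /=.
by apply/separableP => y _; apply: perfect_separable_element.
Qed.

Lemma prim_eltP (K X : {subfield E}) : (K <= X)%VS -> <<K; prim_elt K X>>%VS = X.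
Proof.
move=> sKX; rewrite /prim_elt.
apply: (@epsilon_spec _ (inhabits 0) (fun a : E => <<K; a>>%VS = X :> {vspace E})).
exists (separable_generator K X); apply/esym/eq_adjoin_separable_generator => //.
apply/separableP => y _.
exact: separable_elementS (sub1v K) (perfect_separable_element y).
Qed.

Lemma gal_closureP (X : {subfield E}) : is_gal_closure 1 X (gal_closure 1 X).
Proof.
rewrite /gal_closure; apply: (epsilon_spec (inhabits 1%AS) (is_gal_closure 1 X)).
pose C := (gcore 'Gal({:E} / X) 'Gal({:E} / 1%AS))%G.
have nC : (C <| 'Gal({:E} / 1%AS))%g by apply: gcore_normal; rewrite galS ?sub1v.
exists (fixedField C); split; last split.
- by rewrite -galois_connection ?subvf // gcore_sub.
- exact: normal_fixedField_galois (galois_fullv 1%AS) C nC.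
move=> N sXN /and3P[_ _ nN].
rewrite -(galois_fixedField (galois_fullv N)).
apply: fixedFieldS; rewrite sub_gcore ?galS //.
by apply/normal_norm/normalField_normal; rewrite ?sub1v ?subvf.
Qed.

Lemma dim_mul_card_gal (X : {subfield E}) :
  (\dim X * #|'Gal({:E} / X)%g| = #|'Gal({:E} / 1%AS)%g|)%N.
Proof.
rewrite -!galois_dim ?galois_fullv // mulnC -dim_sup_field ?subvf //.
by rewrite dimv1 divn1.
Qed.

Lemma lin_disjoint_galM (X Y : {subfield E}) : lin_disjoint 1 X Y ->
  ('Gal({:E} / X) * 'Gal({:E} / Y))%g = 'Gal({:E} / 1%AS)%g.
Proof.
rewrite /lin_disjoint dimv1 !divn1 => dXY.
have cardXY := dim_mul_card_gal (X * Y)%AS; rewrite gal_prodv dXY in cardXY.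
have cardX := dim_mul_card_gal X; have cardY := dim_mul_card_gal Y.
set G := 'Gal({:E} / 1%AS)%g in cardXY cardX cardY *.
set A := 'Gal({:E} / X)%g in cardXY cardX *; set B := 'Gal({:E} / Y)%g in cardXY cardY *.
have cardM : (#|A| * #|B| = #|(A * B)%g| * #|A :&: B|)%N := mul_cardG _ _.
have g_gt0 : (0 < #|G|)%N := cardG_gt0 _.
apply/eqP; rewrite eqEcard mul_subG ?galS ?sub1v //=.
rewrite -(leq_pmul2l g_gt0) -{1}cardX -{1}cardY mulnACA cardM -cardXY.
by rewrite (mulnC #|(A * B)%g|) mulnA.
Qed.

Lemma rho_card_rcosets (K X M : {subfield E}) : (K <= X)%VS -> (K <= M)%VS ->
  rho K M X = #|[set ('Gal({:E} / X) :* x)%g | x in gal_into K X M]|.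
Proof.
by move=> sKX sKM; rewrite /rho /rho_elt nroots_minPoly_card_rcosets // prim_eltP.
Qed.

Lemma capv_prodv_galM (N M K' : {subfield E}) : (M <= N)%VS ->
  ('Gal({:E} / N) * 'Gal({:E} / K'))%g = 'Gal({:E} / 1%AS)%g ->
  (N :&: (M * K'))%VS = M.
Proof.
move=> sMN galNK'; apply/eqP; rewrite eqEsubv subv_cap sMN field_subvMr /= andbT.
apply/subvP => v /memv_capP[Nv MK'v].
rewrite -(galois_fixedField (galois_fullv M)); apply/fixedFieldP => [|r Mr].
  exact: memvf.
have := subsetP (galS _ (sub1v M)) r Mr; rewrite -galNK'.
case/mulsgP=> n a Nn K'a rE.
have MK'a : a \in 'Gal({:E} / (M * K')%AS)%g.
  rewrite gal_prodv inE K'a andbT -(mulKg n a) -rE groupM ?groupV //.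
  exact: subsetP (galS _ sMN) n Nn.
by rewrite rE galM ?memvf // (fixed_gal (subvf N) Nn Nv) (fixed_gal (subvf _) MK'a).
Qed.

Lemma gal_into_prodv (L M N K' : {subfield E}) :
  (L <= M)%VS -> (M <= N)%VS -> normalField 1 N ->
  ('Gal({:E} / N) * 'Gal({:E} / K'))%g = 'Gal({:E} / 1%AS)%g ->
  gal_into K' (L * K')%AS (M * K')%AS = gal_into 1 L M :&: 'Gal({:E} / K')%g.
Proof.
move=> sLM sMN nN galNK'; apply/setP => x; rewrite !inE.
have [K'x | _] /= := boolP (x \in 'Gal({:E} / K')%g); last by rewrite andbF.
have Gx : x \in 'Gal({:E} / 1%AS)%g := subsetP (galS _ (sub1v K')) x K'x.
have /andP[_ fixK'] : kHom K' {:E} x by rewrite -gal_kHom ?subvf.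
rewrite Gx andbT aimgM (fixedSpace_limg fixK').
apply/idP/idP => [sxLK' | sxLM]; last exact: prodvSl.
rewrite -(capv_prodv_galM sMN galNK') subv_cap normalField_limg ?(subv_trans sLM) //.
exact: subv_trans (field_subvMr _ _) sxLK'.
Qed.

End GaloisCosets.

Theorem theorem8p12 (F : fieldType) (E : splittingFieldType F)
  (L K' M : {subfield E}) :
  perfect_field F ->
  galois 1%AS K' ->
  (L <= M)%VS ->
  lin_disjoint 1%AS (gal_closure 1%AS L) K' ->
  lin_disjoint 1%AS (gal_closure 1%AS M) K' ->
  rho 1%AS M L = rho K' (M * K')%AS (L * K')%AS.
Proof.
(* E is Galois over every subfield. *)
move=> perfF _ sLM dL dM.
have [sLLt _] := gal_closureP perfF L.
have [sMMt [/and3P[_ _ nMt] _]] := gal_closureP perfF M.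
rewrite !(rho_card_rcosets perfF) ?sub1v ?field_subvMl // gal_prodv.
rewrite (gal_into_prodv perfF sLM sMMt nMt (lin_disjoint_galM perfF dM)).
rewrite (imset_rcoset_gal_into M sLLt (lin_disjoint_galM perfF dL)).
by rewrite (card_imset_rcoset_setI _ (A := 'Gal({:E} / K')%G)) ?subsetIr.
Qed.
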